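(* Let $B_J\in\mathbb R^{n\times n}$ satisfy $\|B_J\|_\infty<1$ (strict diagonal dominance by rows of $A=I-B_J$), and let $\mathcal B$ be any splitting of $B_J$. Then $\rho(T(\mathcal B))<1$, so the associated iterative scheme converges.
   Context: For $B\in\mathbb R^{n\times n}$, a splitting of $B$ of order $d\ge1$ is an ordered $d$-tuple $\mathcal B=(B_1,\dots,B_d)$ of real $n\times n$ matrices with $B_p\neq O$ for all $p$, $\sum_{p=1}^d B_p=B$, and $B_p\circ B_q=O$ (Hadamard product) for $p\ne q$. The iteration matrix of $\mathcal B$ is the $dn\times dn$ matrix $T(\mathcal B)=(I_{dn}-\mathcal L)^{-1}\mathcal U$, where $\mathcal L,\mathcal U$ are $d\times d$ block matrices with $n\times n$ blocks, $\mathcal L_{ij}=B_j$ if $i>j$ and $O$ otherwise, $\mathcal U_{ij}=B_j$ if $i\le j$ and $O$ otherwise. The associated scheme is $X^{(k+1)}=T(\mathcal B)X^{(k)}+\Gamma$. $\rho$ is spectral radius, $\|\cdot\|_\infty$ the maximum-row-sum norm. *)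

From HB Require Import structures.
From mathcomp Require Import all_boot all_order all_algebra.
From mathcomp Require Import complex.
Set Implicit Arguments. Unset Strict Implicit. Unset Printing Implicit Defensive.
Import Order.TTheory GRing.Theory Num.Theory.
Local Open Scope ring_scope.

Definition norm_inf (R : realDomainType) (n : nat) (M : 'M[R]_n) : R :=
  \big[Num.max/0]_(i < n) \sum_(j < n) `|M i j|.

Definition hadamard (R : pzRingType) (m n : nat) (A B : 'M[R]_(m, n)) : 'M[R]_(m, n) :=
  \matrix_(i, j) (A i j * B i j).

Definition is_splitting (R : pzRingType) (n d : nat) (B : 'M[R]_n)
    (Bs : 'I_d -> 'M[R]_n) : Prop :=
  [/\ (1 <= d)%N,
      forall p, Bs p != 0,
      \sum_(p < d) Bs p = B &
      forall p q, p != q -> hadamard (Bs p) (Bs q) = 0].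

(* The d x d block matrices L and U (blocks of size n x n) and the
   iteration matrix T = (I - L)^{-1} U, of size dn x dn written as
   'M_(\sum_(i < d) n). *)
Definition blockL (R : pzRingType) (n d : nat) (Bs : 'I_d -> 'M[R]_n)
  : 'M[R]_(\sum_(i < d) n) :=
  \mxblock_(i < d, j < d) (if (j < i)%N then Bs j else 0).

Definition blockU (R : pzRingType) (n d : nat) (Bs : 'I_d -> 'M[R]_n)
  : 'M[R]_(\sum_(i < d) n) :=
  \mxblock_(i < d, j < d) (if (i <= j)%N then Bs j else 0).

Definition iteration_matrix (R : comUnitRingType) (n d : nat)
    (Bs : 'I_d -> 'M[R]_n) : 'M[R]_(\sum_(i < d) n) :=
  invmx (1%:M - blockL Bs) *m blockU Bs.

(* Complex spectrum (eigenvalues with algebraic multiplicity) of a real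
   square matrix: the roots in R[i] of its characteristic polynomial. *)
Definition spectrum (R : rcfType) (m : nat) (M : 'M[R]_m) : seq R[i] :=
  sval (closed_field_poly_normal (char_poly (map_mx (real_complex R) M))).

Definition spectral_radius (R : rcfType) (m : nat) (M : 'M[R]_m) : R :=
  \big[Num.max/0]_(z <- spectrum M) Normc.normc z.

(* If z is an eigenvalue of T = (I - L)^-1 U with eigenvector w, then
   z w = (U + z L) w.  A row of U + z L lists the entries of one row of
   every piece B_p, each scaled by 1 or by z; the pieces have disjoint
   supports, so when |z| >= 1 that row has absolute sum at most
   |z| ||B_J||_oo < |z|.  This contradicts the eigenvalue equation at an
   entry of w of maximal modulus. *)
From HB Require Import structures.
From mathcomp Require Import all_boot all_order all_algebra.
From mathcomp Require Import complex.
Set Implicit Arguments. Unset Strict Implicit. Unset Printing Implicit Defensive.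
Import Order.TTheory GRing.Theory Num.Theory.
Local Open Scope ring_scope.
Import tagnat.

Section ComplexNorm.
Variable R : rcfType.
Import Normc.

Lemma normc_ge0 (x : R[i]) : 0 <= normc x.
Proof. by case: x => a b; rewrite /normc sqrtr_ge0. Qed.

Lemma normc_real (r : R) : normc (r%:C)%C = `|r|.
Proof. by rewrite /normc /= expr0n /= addr0 sqrtr_sqr. Qed.

Lemma normc_sum (I : Type) (s : seq I) (F : I -> R[i]) :
  normc (\sum_(i <- s) F i) <= \sum_(i <- s) normc (F i).
Proof.
elim: s => [|a s IH]; first by rewrite !big_nil normc0.
by rewrite !big_cons; apply: le_trans (le_normcD _ _) _; rewrite lerD2l.
Qed.

(* Gershgorin-type bound: look at an entry of w of maximal modulus. *)
Lemma eigen_normc_le_row_sum (m : nat) (M : 'M[R[i]]_m) (w : 'cV[R[i]]_m)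
    (z : R[i]) :
  w != 0 -> M *m w = z *: w -> exists r, normc z <= \sum_s normc (M r s).
Proof.
move=> w0 Mw.
have /existsP [r1 w_r1] : [exists r, w r 0 != 0].
  apply: contraNT w0 => /existsPn w_eq0; apply/eqP/matrixP => i j.
  by rewrite ord1 mxE; apply/eqP/negbNE/w_eq0.
have [r _ w_max] := @arg_maxP _ _ _ r1 xpredT (fun s => normc (w s 0)) isT.
exists r; set m0 := normc (w r 0).
have m0_gt0 : 0 < m0.
  apply: lt_le_trans (w_max r1 isT); rewrite lt_def normc_ge0 andbT.
  by apply: contra w_r1 => /eqP/eq0_normc ->.
rewrite -(ler_pM2r m0_gt0) -normcM.
have -> : z * w r 0 = \sum_s M r s * w s 0.
  by have := congr1 (fun v : 'cV_m => v r 0) Mw; rewrite !mxE => <-.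
rewrite mulr_suml; apply: le_trans; first exact: normc_sum.
apply: ler_sum => s _; rewrite normcM ler_pM ?normc_ge0 //; exact: w_max.
Qed.

End ComplexNorm.

Lemma eigen_scale_cancel (R : comUnitRingType) (m : nat) (A U : 'M[R]_m)
    (w : 'cV[R]_m) (z : R) :
  A \in unitmx -> (invmx A *m U) *m w = z *: w -> U *m w = z *: (A *m w).
Proof. by move=> Au Tw; rewrite scalemxAr -Tw -mulmxA mulKVmx. Qed.

Lemma spectrum_eigenvector (R : rcfType) (m : nat) (M : 'M[R]_m) (z : R[i]) :
  z \in spectrum M ->
  exists2 w : 'cV[R[i]]_m, w != 0 & map_mx (real_complex R) M *m w = z *: w.
Proof.
rewrite /spectrum; case: closed_field_poly_normal => r /= charM z_r.
set A := map_mx _ M.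
have : eigenvalue A z.
  rewrite eigenvalue_root_char charM rootZ ?root_prod_XsubC //.
  by rewrite (monicP (char_poly_monic _)) oner_neq0.
move/eigenvalueP => [u uA u0].
have /det0P [v v0 vA] : \det (z%:M - A)^T == 0.
  rewrite det_tr; apply/det0P; exists u => //.
  by rewrite mulmxBr uA mul_mx_scalar subrr.
exists v^T; first by apply: contra v0 => /eqP v_eq0; rewrite -[v]trmxK v_eq0 trmx0.
apply/eqP; rewrite eq_sym -subr_eq0 -mul_scalar_mx -mulmxBl.
by rewrite -[_ *m _]trmxK trmx_mul trmxK vA trmx0.
Qed.

Lemma big_sig (V : nmodType) (n d : nat) (F : 'I_d -> 'I_n -> V) :
  \sum_(s < \sum_(i < d) n) F (sig1 s) (sig2 s) = \sum_(j < d) \sum_(l < n) F j l.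
Proof.
rewrite (sig_big_dep (fun=> true) (fun _ _ => true) F) /=.
rewrite (reindex (@sig d (fun=> n))) /=; last first.
  by exists rank => x _; [rewrite sigK | rewrite rankK].
by apply: eq_bigr.
Qed.

Lemma sum_norm_disjoint_supports (R : numDomainType) (n d : nat)
    (B : 'M[R]_n) (Bs : 'I_d -> 'M[R]_n) k l :
  \sum_(p < d) Bs p = B ->
  (forall p q, p != q -> hadamard (Bs p) (Bs q) = 0) ->
  \sum_(p < d) `|Bs p k l| = `|B k l|.
Proof.
move=> sumB disj; rewrite -sumB summxE.
have other_eq0 p q : p != q -> Bs q k l != 0 -> Bs p k l = 0.
  move=> pq Bq; have := congr1 (fun M : 'M[R]_n => M k l) (disj _ _ pq).
  by rewrite !mxE => /eqP; rewrite mulf_eq0 (negbTE Bq) orbF => /eqP.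
case: (pickP (fun p => Bs p k l != 0)) => [q Bq | all_eq0].
  rewrite (bigD1 q) //= [in RHS](bigD1 q) //= !big1 ?addr0 // => p pq;
  by rewrite (other_eq0 p q pq Bq) ?normr0.
by rewrite !big1 ?normr0 // => p _; move/negbFE/eqP: (all_eq0 p) ->; rewrite ?normr0.
Qed.

Lemma splitting_row_sum_le_norm_inf (R : realDomainType) (n d : nat)
    (B : 'M[R]_n) (Bs : 'I_d -> 'M[R]_n) k :
  \sum_(p < d) Bs p = B ->
  (forall p q, p != q -> hadamard (Bs p) (Bs q) = 0) ->
  \sum_(s < \sum_(i < d) n) `|Bs (sig1 s) k (sig2 s)| <= norm_inf B.
Proof.
move=> sumB disj; rewrite (big_sig (fun p l => `|Bs p k l|)) exchange_big /=.
under eq_bigr => l _ do rewrite (sum_norm_disjoint_supports _ _ sumB disj).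
exact: (le_bigmax 0 (fun i => \sum_(j < n) `|B i j|) k).
Qed.

Section Blocks.
Variables (R : pzRingType) (n d : nat) (Bs : 'I_d -> 'M[R]_n).

Lemma blockLE r s :
  blockL Bs r s = if (sig1 s < sig1 r)%N then Bs (sig1 s) (sig2 r) (sig2 s) else 0.
Proof. by rewrite /blockL mxE; case: ifP => //; rewrite mxE. Qed.

Lemma blockUE r s :
  blockU Bs r s = if (sig1 r <= sig1 s)%N then Bs (sig1 s) (sig2 r) (sig2 s) else 0.
Proof. by rewrite /blockU mxE; case: ifP => //; rewrite mxE. Qed.

End Blocks.

Lemma unitmx_1_sub_blockL (R : comUnitRingType) (n d : nat) (Bs : 'I_d -> 'M[R]_n) :
  1%:M - blockL Bs \in unitmx.
Proof.
have trig : is_trig_mx (1%:M - blockL Bs).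
  apply/is_trig_mxP => r s rs; rewrite mxE [1%:M r s]mxE [(- blockL _) r s]mxE blockLE.
  have /le_sig1 : (r <= s)%O by rewrite leEord ltnW.
  by rewrite leEord ltnNge => ->; rewrite -val_eqE (ltn_eqF rs) subr0.
rewrite unitmxE (det_trig trig) big1 ?unitr1 // => r _.
by rewrite mxE [1%:M r r]mxE [(- blockL _) r r]mxE blockLE ltnn eqxx subr0.
Qed.

Section IterationMatrix.
Variables (R : rcfType) (n d : nat) (Bs : 'I_d -> 'M[R]_n).
Local Notation toC := (map_mx (real_complex R)).
Import Normc.

Lemma iteration_eigen_equation (w : 'cV[R[i]]_(\sum_(i < d) n)) (z : R[i]) :
  toC (iteration_matrix Bs) *m w = z *: w ->
  (toC (blockU Bs) + z *: toC (blockL Bs)) *m w = z *: w.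
Proof.
move=> Tw; have ILu : 1%:M - toC (blockL Bs) \in unitmx.
  by rewrite -(map_mx1 (real_complex R)) -map_mxB map_unitmx unitmx_1_sub_blockL.
move: Tw; rewrite /iteration_matrix map_mxM map_invmx map_mxB map_mx1.
move/(eigen_scale_cancel ILu); rewrite mulmxBl mul1mx scalerBr => Uw.
by rewrite mulmxDl -scalemxAl Uw subrK.
Qed.

Lemma normc_blockU_add_scale_blockL (z : R[i]) r s : 1 <= normc z ->
  normc ((toC (blockU Bs) + z *: toC (blockL Bs)) r s)
    <= normc z * `|Bs (sig1 s) (sig2 r) (sig2 s)|.
Proof.
move=> z_ge1; rewrite mxE [(_ *: toC _) r s]mxE ![map_mx _ _ r s]mxE blockUE blockLE.
case: ltnP => _; first by rewrite rmorph0 add0r normcM normc_real.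
by rewrite rmorph0 mulr0 addr0 normc_real ler_peMl.
Qed.

End IterationMatrix.

Theorem corollary4p1 (R : rcfType) (n d : nat) (BJ : 'M[R]_n)
    (Bs : 'I_d -> 'M[R]_n) :
  norm_inf BJ < 1 ->
  is_splitting BJ Bs ->
  spectral_radius (iteration_matrix Bs) < 1.
Proof.
move=> BJ_lt1 [_ _ sumBJ disj].
rewrite /spectral_radius big_seq; apply: bigmax_lt => // z /spectrum_eigenvector.
move=> [w w0 /iteration_eigen_equation/(eigen_normc_le_row_sum w0) [r z_le]].
rewrite ltNge; apply/negP => z_ge1.
have row_le := splitting_row_sum_le_norm_inf (sig2 r) sumBJ disj.
have : Normc.normc z <= Normc.normc z * norm_inf BJ.
  apply: le_trans z_le (le_trans _ (ler_wpM2l (normc_ge0 z) row_le)).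
  by rewrite mulr_sumr; apply: ler_sum => s _; exact: normc_blockU_add_scale_blockL.
by rewrite ler_pMr ?(lt_le_trans ltr01 z_ge1) // leNgt BJ_lt1.
Qed.
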